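(* Let $L$ be a subspace of $\bigwedge^{k}V$ and $j\leq n$, and let $K$ be the largest subspace of $\bigwedge^{k-1}V^{(j)}$ such that $e_j\wedge K\subseteq L$. Suppose $L$ is monomial with respect to $e_j$, i.e. $L=\big(L\cap\bigwedge^{k}V^{(j)}\big)\oplus\big(L\cap(e_{j}\wedge\bigwedge^{k-1}V^{(j)})\big)$, and let $1\leq i<j$. Then \[ N_{j\to i}L=\left(\Big(L\cap\bigwedge^{k}V^{(j)}\Big)+\left(e_{i}\wedge K\right)\right)\oplus\left(e_{j}\wedge K'\right), \] where $K'$ is the largest subspace of $K$ such that $e_{i}\wedge K'\subseteq L$.
   Context: $\mathbb{F}$ is a field (assumed throughout the paper, for expository purposes, to have characteristic not $2$), $V$ is an $n$-dimensional $\mathbb{F}$-vector space with a fixed basis $e_1,\dots,e_n$, and $\bigwedge V$ its exterior algebra. For $j\in[n]$, $V^{(j)}$ is the span of $\{e_h:h\neq j\}$, and $\bigwedge V^{(j)}$ is viewed as a subalgebra of $\bigwedge V$. Slow shift: for distinct $i,j\in[n]$ and nonzero $m\in\bigwedge^kV$, write uniquely $m=x+e_j\wedge y$ with $x\in\bigwedge^kV^{(j)}$, $y\in\bigwedge^{k-1}V^{(j)}$, and set $N_{j\to i}m=x+e_i\wedge y$ if this is nonzero, and $N_{j\to i}m=e_j\wedge y$ otherwise (the limit as $t\to0$ of the projective action of the linear map $e_j\mapsto e_i+te_j$ fixing the other $e_h$). For a subspace $L$ of $\bigwedge^kV$, $N_{j\to i}L$ is the span of $\{N_{j\to i}m:m\in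 L\setminus\{0\}\}$; it has the same dimension as $L$. *)

From HB Require Import structures.
From mathcomp Require Import all_boot all_order all_algebra.
Set Implicit Arguments. Unset Strict Implicit. Unset Printing Implicit Defensive.
Import GRing.Theory.
Local Open Scope ring_scope.

(* Exterior algebra of V = F^n with basis e_0,...,e_{n-1} (0-based indices
   'I_n for the paper's e_1..e_n).  An element of /\V is given by its
   coordinates on the monomial basis e_S = e_{s1} /\ ... /\ e_{sk}
   (s1 < ... < sk), A ranging over subsets of 'I_n. *)
Section Exterior.
Variables (F : fieldType) (n : nat).

Definition ext := {ffun {set 'I_n} -> F^o}.

Definition mono (A : {set 'I_n}) : ext := [ffun T => (T == A)%:R].
Definition vec (i : 'I_n) : ext := mono [set i].

(* number of inversions when concatenating the increasing words A and T *)
Definition inv_count (A T : {set 'I_n}) : nat :=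
  #|[set p : 'I_n * 'I_n | [&& p.1 \in A, p.2 \in T & (p.2 < p.1)%N]]|.

(* e_S /\ e_T = 0 if A,T intersect, else (-1)^{inv} e_{A u T}; extended
   bilinearly *)
Definition wedge (x y : ext) : ext :=
  [ffun U => \sum_(A : {set 'I_n}) \sum_(T : {set 'I_n})
      if [disjoint A & T] && (A :|: T == U)
      then (-1) ^+ inv_count A T * x A * y T else 0].

Definition wedge_by (v : ext) : 'End(ext) := linfun (wedge v).

Definition extpow (k : nat) : {vspace ext} :=
  <<[seq mono A | A <- enum [set A : {set 'I_n} | #|A| == k]]>>%VS.

(* /\^k V^(j), V^(j) = span of e_h, h <> j *)
Definition extpow_off (j : 'I_n) (k : nat) : {vspace ext} :=
  <<[seq mono A | A <- enum [set A : {set 'I_n} | (#|A| == k) && (j \notin A)]]>>%VS.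

Definition ss_decomp (j : 'I_n) (k : nat) (m x y : ext) : Prop :=
  [/\ x \in extpow_off j k, y \in extpow_off j k.-1 & m = x + wedge (vec j) y].

(* value of the slow shift N_{j->i} m given the decomposition *)
Definition ss_val (i j : 'I_n) (x y : ext) : ext :=
  if x + wedge (vec i) y != 0 then x + wedge (vec i) y else wedge (vec j) y.

Definition ss_image (i j : 'I_n) (k : nat) (L : {vspace ext}) (m' : ext) : Prop :=
  exists m x y, [/\ m \in L, m != 0, ss_decomp j k m x y & m' = ss_val i j x y].

Definition is_span (W : {vspace ext}) (P : ext -> Prop) : Prop :=
  (forall v, P v -> v \in W) /\
  (forall U : {vspace ext}, (forall v, P v -> v \in U) -> (W <= U)%VS).

End Exterior.

From HB Require Import structures.
From mathcomp Require Import all_boot all_order all_algebra.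
Import GRing.Theory.
Local Open Scope ring_scope.

(* Every m in L splits uniquely as x + e_j /\ y with x free of e_j, and by
   monomiality x and e_j /\ y lie in L separately, so y lies in K.  Hence
   N_{j->i} m is x + e_i /\ y, an element of (L :&: /\V^(j)) + e_i /\ K,
   unless x + e_i /\ y = 0; then e_i /\ y = -x lies in L, so y lies in K' and
   N_{j->i} m = e_j /\ y.  Conversely each generator of the right-hand side is
   the shift of an explicit element of L: x itself, e_j /\ y for y in K, and
   e_j /\ y - e_i /\ y for y in K'.  The sum is direct because e_j /\ K' has
   no coordinate free of e_j while the first summand has only such
   coordinates. *)

Lemma mem_largest_subspace (R : fieldType) (aT rT : vectType R)
    (f : 'Hom(aT, rT)) (W K : {vspace aT}) (L : {vspace rT}) :
  (K <= W)%VS -> (f @: K <= L)%VS ->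
  (forall U : {vspace aT}, (U <= W)%VS -> (f @: U <= L)%VS -> (U <= K)%VS) ->
  forall y, y \in W -> f y \in L -> y \in K.
Proof.
move=> sKW sfKL Kmax y yW fyL.
have sKyK : (K + <[y]> <= K)%VS.
  apply: Kmax; first by rewrite subv_add sKW -memvE.
  by rewrite limgD limg_line subv_add sfKL -memvE.
exact: subvP sKyK _ (subvP (addvSr K _) _ (memv_line y)).
Qed.

Section Exterior.
Local Set Implicit Arguments. Local Unset Strict Implicit.
Variables (F : fieldType) (n : nat).
Local Notation ext := (ext F n).
Local Notation vec := (vec F).

Lemma wedge_is_linear (v : ext) : linear (wedge v).
Proof.
move=> a x y; apply/ffunP => U; rewrite !ffunE.
rewrite scaler_sumr -big_split; apply: eq_bigr => A _.
rewrite scaler_sumr -big_split; apply: eq_bigr => T _.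
case: ifP => _ /=; last by rewrite scaler0 addr0.
rewrite /GRing.scale /= !ffunE /=.
change (a *: x T) with (a * x T).
by rewrite mulrDr mulrCA.
Qed.

HB.instance Definition _ (v : ext) :=
  GRing.isLinear.Build F ext ext *:%R (wedge v) (wedge_is_linear v).

Lemma wedge_byE (v u : ext) : wedge_by v u = wedge v u.
Proof. by rewrite lfunE. Qed.

Definition avoid (j : 'I_n) (z : ext) := forall A : {set 'I_n}, j \in A -> z A = 0.

Lemma avoidD j z1 z2 : avoid j z1 -> avoid j z2 -> avoid j (z1 + z2).
Proof. by move=> h1 h2 A jA; rewrite !ffunE /= h1 // h2 // addr0. Qed.

Lemma avoidN j z : avoid j z -> avoid j (- z).
Proof. by move=> h A jA; rewrite !ffunE /= h // oppr0. Qed.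

Lemma span_coord_eq0 (X : seq ext) (A : {set 'I_n}) :
  (forall x, x \in X -> x A = 0) -> forall z, z \in <<X>>%VS -> z A = 0.
Proof.
move=> X_A0 z zX; rewrite (coord_span (X := in_tuple X) zX) sum_ffunE.
by apply: big1 => l _; rewrite ffunE X_A0 ?scaler0 // mem_nth.
Qed.

Lemma extpow_off_avoid j d z : z \in extpow_off F j d -> avoid j z.
Proof.
move=> zW A jA; apply: span_coord_eq0 zW => x /mapP [B].
rewrite mem_enum inE => /andP [_ jB] ->.
by rewrite ffunE; case: eqP => // eBA; rewrite -eBA jA in jB.
Qed.

Lemma wedge_vec_notin (j : 'I_n) y (U : {set 'I_n}) :
  j \notin U -> wedge (vec j) y U = 0.
Proof.
move=> jU; rewrite ffunE; apply: big1 => A _; apply: big1 => T _.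
case: ifP => // /andP [_ /eqP eU]; rewrite ffunE; case: eqP => [eA|_].
  by rewrite -eU eA inE set11 in jU.
by rewrite mulr0 mul0r.
Qed.

Lemma avoid_wedge_vec (i j : 'I_n) y :
  i != j -> avoid j y -> avoid j (wedge (vec i) y).
Proof.
move=> ij y_j U jU; rewrite ffunE; apply: big1 => A _; apply: big1 => T _.
case: ifP => // /andP [_ /eqP eU]; rewrite ffunE; case: eqP => [eA|_].
  rewrite y_j ?mulr0 //.
  by move: jU; rewrite -eU eA !inE => /orP [/eqP ji|//]; rewrite ji eqxx in ij.
by rewrite mulr0 mul0r.
Qed.

Lemma avoid_wedge_vec_eq0 (j : 'I_n) w :
  avoid j (wedge (vec j) w) -> wedge (vec j) w = 0.
Proof.
move=> w_j; apply/ffunP => U; rewrite [RHS]ffunE.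
by case: (boolP (j \in U)) => jU; [exact: w_j | exact: wedge_vec_notin].
Qed.

Lemma wedge_vec_coord (j : 'I_n) y (T : {set 'I_n}) : j \notin T ->
  wedge (vec j) y (j |: T) = (-1) ^+ inv_count [set j] T * y T.
Proof.
move=> jT; rewrite ffunE (bigD1 [set j]) //= [X in _ + X]big1 ?addr0; last first.
  move=> A nAj; apply: big1 => T' _; case: ifP => // _.
  by rewrite ffunE (negbTE nAj) mulr0 mul0r.
rewrite (bigD1 T) //= [X in _ + X]big1 ?addr0; last first.
  move=> T' nT'T; case: ifP => // /andP [dT' /eqP eT'].
  case/negP: nT'T; apply/eqP/setP => x; move/setP: eT' => /(_ x); rewrite !inE.
  case: (eqVneq x j) => [->|_ //]; rewrite (negbTE jT).
  by move: dT'; rewrite disjoints1 => /negbTE.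
by rewrite disjoints1 jT eqxx /= ffunE eqxx mulr1.
Qed.

Lemma wedge_vec_eq0 (j : 'I_n) y : avoid j y -> wedge (vec j) y = 0 -> y = 0.
Proof.
move=> y_j jy0; apply/ffunP => T; rewrite [RHS]ffunE.
case: (boolP (j \in T)) => jT; first exact: y_j.
have /esym/eqP := wedge_vec_coord y jT.
by rewrite jy0 ffunE mulf_eq0 signr_eq0 => /eqP.
Qed.

(* /\V = /\V^(j) (+) e_j /\ /\V: the first component is determined. *)
Lemma avoid_add_wedge_vec_inj (j : 'I_n) x x' y y' :
  avoid j x -> avoid j x' ->
  x + wedge (vec j) y = x' + wedge (vec j) y' -> x = x'.
Proof.
move=> x_j x'_j e; apply/eqP; rewrite -subr_eq0; apply/eqP.
have exx' : x - x' = wedge (vec j) (y' - y).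
  rewrite -wedge_byE linearB /= !wedge_byE; apply: (addIr (wedge (vec j) y)).
  by rewrite subrK addrAC e addrAC subrr add0r.
rewrite exx' avoid_wedge_vec_eq0 // -exx'.
exact: avoidD x_j (avoidN x'_j).
Qed.

Section SlowShift.
Variables (k : nat) (i j : 'I_n) (L K K' : {vspace ext}).
Hypothesis neq_ij : i != j.
Hypothesis K_off : (K <= extpow_off F j k.-1)%VS.
Hypothesis wedge_j_K : (wedge_by (vec j) @: K <= L)%VS.
Hypothesis K_max : forall U : {vspace ext}, (U <= extpow_off F j k.-1)%VS ->
  (wedge_by (vec j) @: U <= L)%VS -> (U <= K)%VS.
Hypothesis L_monomial :
  L = (L :&: extpow_off F j k + L :&: (wedge_by (vec j) @: extpow_off F j k.-1))%VS.
Hypothesis K'_sub : (K' <= K)%VS.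
Hypothesis wedge_i_K' : (wedge_by (vec i) @: K' <= L)%VS.
Hypothesis K'_max : forall U : {vspace ext}, (U <= K)%VS ->
  (wedge_by (vec i) @: U <= L)%VS -> (U <= K')%VS.

Local Notation L0 := (L :&: extpow_off F j k)%VS.
Local Notation target :=
  ((L :&: extpow_off F j k + wedge_by (vec i) @: K) + wedge_by (vec j) @: K')%VS.

Lemma mem_K y : y \in extpow_off F j k.-1 -> wedge (vec j) y \in L -> y \in K.
Proof. by rewrite -wedge_byE; apply: mem_largest_subspace. Qed.

Lemma mem_K' y : y \in K -> wedge (vec i) y \in L -> y \in K'.
Proof. by rewrite -wedge_byE; apply: mem_largest_subspace. Qed.

Lemma K_avoid y : y \in K -> avoid j y.
Proof. by move/(subvP K_off); apply: extpow_off_avoid. Qed.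

Lemma L_decomp m : m \in L ->
  exists2 x, x \in L0 & exists2 y, y \in extpow_off F j k.-1 & m = x + wedge (vec j) y.
Proof.
rewrite {1}L_monomial => /memv_addP [x x_L0 [_ /memv_capP [_ /memv_imgP [y y_off ->]] ->]].
by exists x => //; exists y; rewrite ?wedge_byE.
Qed.

Lemma avoid_memL0 m : m \in L -> avoid j m -> m \in L0.
Proof.
move=> mL m_j; have [x x_L0 [y _ emx]] := L_decomp mL.
have x_j : avoid j x by case/memv_capP: x_L0 => _ /extpow_off_avoid.
suff -> : m = x by [].
apply: (avoid_add_wedge_vec_inj (y := 0) (y' := y) m_j x_j).
by rewrite -emx -wedge_byE linear0 addr0.
Qed.

Lemma ss_decomp_mem m x y : m \in L -> ss_decomp j k m x y -> x \in L /\ y \in K.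
Proof.
move=> mL [x_off y_off emx]; have [a a_L0 [y' _ ema]] := L_decomp mL.
have a_j : avoid j a by case/memv_capP: a_L0 => _ /extpow_off_avoid.
have exa : x = a.
  apply: (avoid_add_wedge_vec_inj (y := y) (y' := y') (extpow_off_avoid x_off) a_j).
  by rewrite -emx -ema.
have xL : x \in L by rewrite exa; case/memv_capP: a_L0.
split=> //; apply: mem_K => //.
have -> : wedge (vec j) y = m - x by rewrite emx addrC addKr.
exact: memvB.
Qed.

Lemma ss_image_sub v : ss_image i j k L v -> v \in target.
Proof.
move=> [m [x [y [mL _ dm ->]]]]; have [xL yK] := ss_decomp_mem mL dm.
case: dm => x_off _ _; rewrite /ss_val; case: ifP => [_ | /negbFE/eqP xy0].
  apply: (subvP (addvSl _ _)); apply: memv_add; first exact/memv_capP.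
  by rewrite -wedge_byE memv_img.
have eyx : wedge (vec i) y = - x by apply/eqP; rewrite -addr_eq0 addrC xy0.
apply: (subvP (addvSr _ _)); rewrite -wedge_byE memv_img // mem_K' //.
by rewrite eyx memvN.
Qed.

Lemma avoid_L0_add_wedge_i_K v : v \in (L0 + wedge_by (vec i) @: K)%VS -> avoid j v.
Proof.
case/memv_addP=> x /memv_capP [_ /extpow_off_avoid x_j] [_ /memv_imgP [y yK ->] ->].
by rewrite wedge_byE; apply: avoidD x_j (avoid_wedge_vec neq_ij (K_avoid yK)).
Qed.

Lemma L0_wedge_i_K_direct :
  ((L0 + wedge_by (vec i) @: K) :&: (wedge_by (vec j) @: K'))%VS = 0%VS.
Proof.
apply/eqP; rewrite -subv0; apply/subvP => v.
case/memv_capP=> /avoid_L0_add_wedge_i_K v_j /memv_imgP [y _ ev].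
rewrite ev wedge_byE in v_j *.
by rewrite memv0 avoid_wedge_vec_eq0.
Qed.

Section Span.
Variable U : {vspace ext}.
Hypothesis U_image : forall v, ss_image i j k L v -> v \in U.

Lemma ss_val_mem m x y : m \in L -> ss_decomp j k m x y -> ss_val i j x y \in U.
Proof.
move=> mL dm; have [m0 | nz_m] := eqVneq m 0; last by apply: U_image; exists m, x, y.
case: dm => /extpow_off_avoid x_j /extpow_off_avoid y_j; rewrite m0 => e0.
have x0 : x = 0.
  apply: (avoid_add_wedge_vec_inj (x' := 0) (y := y) (y' := 0) x_j).
  - by move=> A _; rewrite ffunE.
  - by rewrite -e0 -wedge_byE linear0 addr0.
have y0 : y = 0 by apply: (wedge_vec_eq0 y_j); rewrite [RHS]e0 x0 add0r.
by rewrite /ss_val x0 y0 -!wedge_byE !linear0 addr0 eqxx mem0v.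
Qed.

Lemma L0_sub_span : (L0 <= U)%VS.
Proof.
apply/subvP => v /memv_capP [vL v_off].
have -> : v = ss_val i j v 0 by rewrite /ss_val -!wedge_byE !linear0 addr0; case: eqP.
by apply: (ss_val_mem vL); split; rewrite ?mem0v // -wedge_byE linear0 addr0.
Qed.

Lemma wedge_i_K_sub_span : (wedge_by (vec i) @: K <= U)%VS.
Proof.
apply/subvP => _ /memv_imgP [y yK ->]; rewrite wedge_byE.
have [-> | nz] := eqVneq (wedge (vec i) y) 0; first exact: mem0v.
have := @ss_val_mem (wedge (vec j) y) 0 y; rewrite /ss_val add0r nz; apply.
  by rewrite -wedge_byE (subvP wedge_j_K) // memv_img.
by split; rewrite ?mem0v ?(subvP K_off) ?add0r.
Qed.

Lemma wedge_j_K'_sub_span : (wedge_by (vec j) @: K' <= U)%VS.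
Proof.
apply/subvP => _ /memv_imgP [y yK' ->]; have yK := subvP K'_sub _ yK'.
have iyL : wedge (vec i) y \in L by rewrite -wedge_byE (subvP wedge_i_K') ?memv_img.
have /memv_capP [_ iy_off] := avoid_memL0 iyL (avoid_wedge_vec neq_ij (K_avoid yK)).
have := @ss_val_mem (wedge (vec j) y - wedge (vec i) y) (- wedge (vec i) y) y.
rewrite /ss_val addNr eqxx wedge_byE; apply.
  by rewrite memvB // -wedge_byE (subvP wedge_j_K) ?memv_img.
by split; rewrite ?memvN ?(subvP K_off) // addrC.
Qed.

End Span.

Lemma is_span_ss_image : is_span target (ss_image i j k L).
Proof.
split=> [|U U_image]; first exact: ss_image_sub.
by rewrite !subv_add L0_sub_span ?wedge_i_K_sub_span ?wedge_j_K'_sub_span.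
Qed.

End SlowShift.

End Exterior.

Theorem lemma3p5 (F : fieldType) (n k : nat) (i j : 'I_n)
    (L K K' : {vspace ext F n}) :
  (2%:R != 0 :> F) ->
  (L <= extpow F n k)%VS ->
  (* K is the largest subspace of /\^(k-1) V^(j) with e_j /\ K <= L *)
  (K <= extpow_off F j k.-1)%VS ->
  (wedge_by (vec F j) @: K <= L)%VS ->
  (forall U : {vspace ext F n}, (U <= extpow_off F j k.-1)%VS ->
     (wedge_by (vec F j) @: U <= L)%VS -> (U <= K)%VS) ->
  (* L is monomial with respect to e_j *)
  L = (L :&: extpow_off F j k + L :&: (wedge_by (vec F j) @: extpow_off F j k.-1))%VS ->
  (i < j)%N ->
  (* K' is the largest subspace of K with e_i /\ K' <= L *)
  (K' <= K)%VS ->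
  (wedge_by (vec F i) @: K' <= L)%VS ->
  (forall U : {vspace ext F n}, (U <= K)%VS ->
     (wedge_by (vec F i) @: U <= L)%VS -> (U <= K')%VS) ->
  is_span ((L :&: extpow_off F j k + wedge_by (vec F i) @: K) + wedge_by (vec F j) @: K')%VS
          (ss_image i j k L)
  /\ ((L :&: extpow_off F j k + wedge_by (vec F i) @: K) :&: (wedge_by (vec F j) @: K'))%VS = 0%VS.
Proof.
move=> _ _ K_off wedge_j_K K_max L_monomial lt_ij K'_sub wedge_i_K' K'_max.
have neq_ij : i != j by apply: contraTneq lt_ij => ->; rewrite ltnn.
split; first exact: is_span_ss_image.
exact: L0_wedge_i_K_direct.
Qed.
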